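(* Let $(X,d)$ be a complete metric space and let $T:X\to X$ be a mapping for which there exists $\beta\in[0,\tfrac23)$ such that $$d(Tx,T^2x)+d(T^2x,Ty)+d(Ty,Tx)\le \beta\,[\,d(x,Tx)+d(y,Ty)+d(Tx,T^2x)\,]$$ for all $x,y\in X$ such that $x$, $y$, $Tx$ are pairwise distinct (i.e. $T$ is a generalized orbital triangular Kannan contraction). Suppose that $T$ has no periodic points of prime period $2$. Then $T$ has a fixed point.
   Context: A point $x\in X$ is a periodic point of period $n$ of $T$ if $T^n x=x$; the least positive integer $n$ with $T^nx=x$ is its prime period. Thus ''no periodic points of prime period $2$'' means there is no $x\in X$ with $T^2x=x$ and $Tx\neq x$. *)

From Stdlib Require Import Reals.
Open Scope R_scope.

Definition is_metric {X : Type} (d : X -> X -> R) : Prop :=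
  (forall x y, 0 <= d x y) /\
  (forall x y, d x y = 0 <-> x = y) /\
  (forall x y, d x y = d y x) /\
  (forall x y z, d x z <= d x y + d y z).

Definition cauchy_seq {X : Type} (d : X -> X -> R) (u : nat -> X) : Prop :=
  forall eps, 0 < eps -> exists N, forall m n, (N <= m)%nat -> (N <= n)%nat ->
    d (u m) (u n) < eps.

Definition converges_to {X : Type} (d : X -> X -> R) (u : nat -> X) (l : X) : Prop :=
  forall eps, 0 < eps -> exists N, forall n, (N <= n)%nat -> d (u n) l < eps.

Definition complete_metric {X : Type} (d : X -> X -> R) : Prop :=
  is_metric d /\
  forall u : nat -> X, cauchy_seq d u -> exists l, converges_to d u l.

Definition gen_orbital_triangular_kannan {X : Type} (d : X -> X -> R)
    (T : X -> X) (beta : R) : Prop :=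
  0 <= beta /\ beta < 2 / 3 /\
  forall x y : X, x <> y -> y <> T x -> x <> T x ->
    d (T x) (T (T x)) + d (T (T x)) (T y) + d (T y) (T x)
      <= beta * (d x (T x) + d y (T y) + d (T x) (T (T x))).

Definition no_prime_period_two {X : Type} (T : X -> X) : Prop :=
  ~ exists x : X, T (T x) = x /\ T x <> x.

(* Along an orbit w, T w, T^2 w, ... without fixed points, the contraction
   condition applied to the pair (T w, w) (admissible because there are no
   points of prime period 2, so T^2 w <> w) bounds the perimeter
   P w = d(w,Tw) + d(Tw,T^2w) + d(T^2w,w) of consecutive orbit triangles:
   (2 - beta) P(Tw) <= 2 beta P(w), and 2 beta / (2 - beta) < 1 exactly when
   beta < 2/3.  So the orbit is Cauchy and converges to some z; the perimeters
   strictly decrease, so the orbit never revisits a point and eventually avoids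
   z.  Applying the condition to (x, y) = (T^n x0, z) and letting n -> oo gives
   2 d(z,Tz) <= beta d(z,Tz), hence T z = z. *)

From Stdlib Require Import Reals.
From Stdlib Require Import Lra Lia Classical.
Open Scope R_scope.

Lemma injective_eventually_avoids {X : Type} (u : nat -> X) (z : X) :
  (forall m n, u m = u n -> m = n) ->
  exists N, forall n, (N <= n)%nat -> u n <> z.
Proof.
  intros Hinj.
  destruct (classic (exists k, u k = z)) as [[k Hk]|Hnone].
  - exists (S k); intros n Hn Hz.
    rewrite <- Hk in Hz; apply Hinj in Hz; lia.
  - exists O; intros n _ Hz; apply Hnone; eauto.
Qed.

Lemma decreasing_along_injective {X : Type} (g : X -> R) (u : nat -> X) :
  (forall n, g (u (S n)) < g (u n)) ->
  forall m n, u m = u n -> m = n.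
Proof.
  intros Hdec.
  assert (Hlt : forall n k, g (u (n + S k)%nat) < g (u n)).
  { intros n k; induction k as [|k IH].
    - rewrite Nat.add_1_r; apply Hdec.
    - rewrite Nat.add_succ_r; exact (Rlt_trans _ _ _ (Hdec _) IH). }
  intros m n Hmn.
  destruct (Nat.lt_trichotomy m n) as [Hl|[Hl|Hl]]; [exfalso| exact Hl |exfalso].
  - replace n with (m + S (n - S m))%nat in Hmn by lia.
    pose proof (Hlt m (n - S m)%nat) as H; rewrite <- Hmn in H; lra.
  - replace m with (n + S (m - S n))%nat in Hmn by lia.
    pose proof (Hlt n (m - S n)%nat) as H; rewrite Hmn in H; lra.
Qed.

Section Metric.

Variables (X : Type) (d : X -> X -> R).
Hypothesis Hd : is_metric d.

Lemma dist_nonneg x y : 0 <= d x y.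
Proof. apply Hd. Qed.

Lemma dist_sym x y : d x y = d y x.
Proof. apply Hd. Qed.

Lemma dist_triangle x y z : d x z <= d x y + d y z.
Proof. apply Hd. Qed.

Lemma dist_refl x : d x x = 0.
Proof. apply Hd; reflexivity. Qed.

Lemma dist_pos x y : x <> y -> 0 < d x y.
Proof.
  intros Hxy; destruct (dist_nonneg x y) as [H|H]; [exact H|].
  exfalso; apply Hxy, Hd; auto.
Qed.

Section GeometricSteps.

Variables (u : nat -> X) (C q : R).
Hypotheses (Hq0 : 0 <= q) (Hq1 : q < 1).
Hypothesis Hstep : forall n, d (u n) (u (S n)) <= C * q ^ n.

Lemma dist_geometric_tail n k :
  d (u n) (u (n + k)%nat) * (1 - q) <= C * (q ^ n - q ^ (n + k)).
Proof.
  induction k as [|k IH].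
  - rewrite Nat.add_0_r, dist_refl; lra.
  - rewrite Nat.add_succ_r; simpl pow.
    pose proof (dist_triangle (u n) (u (n + k)%nat) (u (S (n + k)))) as Htri.
    pose proof (Hstep (n + k)%nat) as Hs.
    assert (Htri' : d (u n) (u (S (n + k))) * (1 - q)
                    <= (d (u n) (u (n + k)%nat) + d (u (n + k)%nat) (u (S (n + k))))
                       * (1 - q)) by (apply Rmult_le_compat_r; lra).
    assert (Hs' : d (u (n + k)%nat) (u (S (n + k))) * (1 - q)
                  <= C * q ^ (n + k) * (1 - q)) by (apply Rmult_le_compat_r; lra).
    lra.
Qed.

Lemma cauchy_of_geometric_steps : cauchy_seq d u.
Proof.
  assert (HC : 0 <= C).
  { pose proof (Hstep O) as H; pose proof (dist_nonneg (u O) (u 1%nat)); simpl in H; lra. }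
  assert (Htail : forall n k, d (u n) (u (n + k)%nat) * (1 - q) <= C * q ^ n).
  { intros n k; pose proof (dist_geometric_tail n k).
    pose proof (pow_le q (n + k) Hq0); nra. }
  intros eps Heps.
  assert (Hy : 0 < eps * (1 - q) / (C + 1)) by (apply Rdiv_lt_0_compat; nra).
  destruct (pow_lt_1_zero q ltac:(rewrite Rabs_right; lra) _ Hy) as [N HN].
  assert (Hnear : forall a k, (N <= a)%nat -> d (u a) (u (a + k)%nat) < eps).
  { intros a k Ha.
    pose proof (HN a Ha) as Hqa; rewrite Rabs_right in Hqa by (apply Rle_ge, pow_le; lra).
    assert (HCqa : C * q ^ a < eps * (1 - q)).
    { apply Rle_lt_trans with ((C + 1) * q ^ a).
      - pose proof (pow_le q a Hq0); lra.
      - apply Rmult_lt_reg_l with (/ (C + 1)); [apply Rinv_0_lt_compat; lra|].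
        rewrite <- Rmult_assoc, Rinv_l, Rmult_1_l by lra.
        unfold Rdiv in Hqa; lra. }
    apply Rmult_lt_reg_r with (1 - q); [lra|].
    pose proof (Htail a k); lra. }
  exists N; intros m n Hm Hn.
  destruct (Nat.le_ge_cases m n) as [H|H].
  - replace n with (m + (n - m))%nat by lia; auto.
  - rewrite dist_sym; replace m with (n + (m - n))%nat by lia; auto.
Qed.

End GeometricSteps.

Section Kannan.

Variables (T : X -> X) (beta : R).
Hypothesis Hk : gen_orbital_triangular_kannan d T beta.

Definition perimeter (w : X) : R :=
  d w (T w) + d (T w) (T (T w)) + d (T (T w)) w.

Definition kannan_ratio : R := 2 * beta / (2 - beta).

Lemma kannan_ratio_nonneg : 0 <= kannan_ratio.
Proof.
  destruct Hk as [Hb0 [Hb1 _]]; unfold kannan_ratio.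
  apply Rmult_le_pos; [lra|]; apply Rlt_le, Rinv_0_lt_compat; lra.
Qed.

Lemma kannan_ratio_lt_1 : kannan_ratio < 1.
Proof.
  destruct Hk as [Hb0 [Hb1 _]]; unfold kannan_ratio.
  apply Rmult_lt_reg_r with (2 - beta); [lra|].
  unfold Rdiv; rewrite Rmult_assoc, Rinv_l; lra.
Qed.

Lemma perimeter_contraction w :
  T w <> w -> T (T w) <> w -> T (T w) <> T w ->
  perimeter (T w) <= kannan_ratio * perimeter w.
Proof.
  intros H1 H2 H3; destruct Hk as [Hb0 [Hb1 Hcontr]].
  pose proof (Hcontr (T w) w H1 (fun e => H2 (eq_sym e)) (fun e => H3 (eq_sym e)))
    as Horb.
  assert (Hhalf : 2 * d (T (T w)) (T (T (T w))) <= perimeter (T w)).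
  { unfold perimeter.
    pose proof (dist_triangle (T (T w)) (T w) (T (T (T w)))).
    rewrite (dist_sym (T (T w)) (T w)), (dist_sym (T w) (T (T (T w)))) in *; lra. }
  assert (Hprev : d w (T w) + d (T w) (T (T w)) <= perimeter w).
  { unfold perimeter; pose proof (dist_nonneg (T (T w)) w); lra. }
  assert (Hmain : (2 - beta) * perimeter (T w) <= 2 * beta * perimeter w).
  { assert (beta * (2 * d (T (T w)) (T (T (T w))))  <= beta * perimeter (T w))
      by (apply Rmult_le_compat_l; lra).
    assert (beta * (d w (T w) + d (T w) (T (T w))) <= beta * perimeter w)
      by (apply Rmult_le_compat_l; lra).
    unfold perimeter in *; lra. }
  unfold kannan_ratio, Rdiv.
  apply Rmult_le_reg_l with (2 - beta); [lra|].
  replace ((2 - beta) * (2 * beta * / (2 - beta) * perimeter w))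
    with (2 * beta * perimeter w) by (field; lra).
  exact Hmain.
Qed.

Lemma orbit_limit_fixed (u : nat -> X) (z : X) :
  (forall n, u (S n) = T (u n)) ->
  (forall m n, u m = u n -> m = n) ->
  converges_to d u z -> T z = z.
Proof.
  intros Horb Hinj Hlim; destruct Hk as [Hb0 [Hb1 Hcontr]].
  apply NNPP; intros Hz.
  set (D := d z (T z)).
  assert (HD : 0 < D) by (apply dist_pos; auto).
  destruct (injective_eventually_avoids u z Hinj) as [N0 Havoid].
  destruct (Hlim (D / 4) ltac:(lra)) as [N1 Hnear].
  set (n := (N0 + N1)%nat).
  pose proof (Hnear n ltac:(unfold n; lia)) as e0.
  pose proof (Hnear (S n) ltac:(unfold n; lia)) as e1.
  pose proof (Hnear (S (S n)) ltac:(unfold n; lia)) as e2.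
  assert (Hstep : u n <> T (u n)).
  { rewrite <- Horb; intros e; apply Hinj in e; lia. }
  assert (Hnz : u n <> z) by (apply Havoid; unfold n; lia).
  assert (Hsz : z <> T (u n)).
  { rewrite <- Horb; intros e; symmetry in e; revert e; apply Havoid; unfold n; lia. }
  pose proof (Hcontr (u n) z Hnz Hsz Hstep) as Hineq.
  rewrite <- !Horb in Hineq; fold D in Hineq.
  (* as n -> oo the left side tends to 2 D and the right side to beta D *)
  pose proof (dist_triangle z (u (S (S n))) (T z)) as t1.
  pose proof (dist_triangle z (u (S n)) (T z)) as t2.
  pose proof (dist_triangle (u n) z (u (S n))) as t3.
  pose proof (dist_triangle (u (S n)) z (u (S (S n)))) as t4.
  rewrite (dist_sym z (u (S (S n)))) in t1, t4.
  rewrite (dist_sym z (u (S n))) in t2, t3.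
  rewrite (dist_sym (u (S n)) (T z)) in t2.
  fold D in t1, t2.
  pose proof (dist_nonneg (u n) (u (S n))).
  pose proof (dist_nonneg (u (S n)) (u (S (S n)))).
  assert (beta * (d (u n) (u (S n)) + D + d (u (S n)) (u (S (S n))))
          <= 2 / 3 * (d (u n) (u (S n)) + D + d (u (S n)) (u (S (S n)))))
    by (apply Rmult_le_compat_r; lra).
  lra.
Qed.

Section Orbit.

Variable x0 : X.
Hypothesis Hnofix : forall n, T (Nat.iter n T x0) <> Nat.iter n T x0.
Hypothesis Hnp : no_prime_period_two T.

Lemma orbit_perimeter_contraction n :
  perimeter (Nat.iter (S n) T x0) <= kannan_ratio * perimeter (Nat.iter n T x0).
Proof.
  apply perimeter_contraction.
  - apply Hnofix.
  - intros e; apply Hnp; exists (Nat.iter n T x0); split; [exact e | apply Hnofix].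
  - apply (Hnofix (S n)).
Qed.

Lemma orbit_step_le_perimeter n :
  d (Nat.iter n T x0) (Nat.iter (S n) T x0) <= perimeter (Nat.iter n T x0).
Proof.
  unfold perimeter; simpl.
  pose proof (dist_nonneg (T (Nat.iter n T x0)) (T (T (Nat.iter n T x0)))).
  pose proof (dist_nonneg (T (T (Nat.iter n T x0))) (Nat.iter n T x0)); lra.
Qed.

Lemma orbit_cauchy : cauchy_seq d (fun n => Nat.iter n T x0).
Proof.
  apply cauchy_of_geometric_steps with (perimeter x0) kannan_ratio.
  - exact kannan_ratio_nonneg.
  - exact kannan_ratio_lt_1.
  - intros n; apply Rle_trans with (1 := orbit_step_le_perimeter n).
    induction n as [|n IH]; [simpl; lra|].
    apply Rle_trans with (1 := orbit_perimeter_contraction n); simpl pow.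
    replace (perimeter x0 * (kannan_ratio * kannan_ratio ^ n))
      with (kannan_ratio * (perimeter x0 * kannan_ratio ^ n)) by ring.
    apply Rmult_le_compat_l; [exact kannan_ratio_nonneg | exact IH].
Qed.

Lemma orbit_injective m n : Nat.iter m T x0 = Nat.iter n T x0 -> m = n.
Proof.
  apply (decreasing_along_injective perimeter (fun n => Nat.iter n T x0)).
  intros k.
  assert (Hpos : 0 < perimeter (Nat.iter k T x0)).
  { pose proof (dist_pos _ _ (fun e => Hnofix k (eq_sym e))).
    pose proof (orbit_step_le_perimeter k); simpl in *; lra. }
  pose proof (orbit_perimeter_contraction k).
  pose proof kannan_ratio_lt_1; nra.
Qed.

End Orbit.

End Kannan.

End Metric.

Theorem theorem4p1 (X : Type) (d : X -> X -> R) (T : X -> X) :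
  inhabited X ->
  complete_metric d ->
  (exists beta : R, gen_orbital_triangular_kannan d T beta) ->
  no_prime_period_two T ->
  exists x : X, T x = x.
Proof.
  intros [x0] [Hd Hcomplete] [beta Hk] Hnp.
  destruct (classic (exists n, T (Nat.iter n T x0) = Nat.iter n T x0))
    as [[n Hn]|Hnofix]; [eauto|].
  assert (Hmove : forall n, T (Nat.iter n T x0) <> Nat.iter n T x0)
    by (intros n Hn; apply Hnofix; eauto).
  destruct (Hcomplete _ (orbit_cauchy X d Hd T beta Hk x0 Hmove Hnp)) as [z Hz].
  exists z.
  apply (orbit_limit_fixed X d Hd T beta Hk (fun n => Nat.iter n T x0)).
  - intros n; reflexivity.
  - exact (orbit_injective X d Hd T beta Hk x0 Hmove Hnp).
  - exact Hz.
Qed.
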